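(* Let $\kappa>2$. Then the solution $t\mapsto e^{i\kappa t/2}\frac{1}{\sqrt2}(1,1)$ of system (H) is spectrally unstable and orbitally unstable.
   Context: Let $\kappa>0$. System (H) is the ODE system for $u=(u_0,u_1):\mathbb R\to\mathbb C^2$: $i u_0'=u_0-u_1-\kappa|u_0|^2u_0$, $\; i u_1'=u_1-u_0-\kappa|u_1|^2u_1$. Linearization about a solution $e^{i\omega t}U_*$ with $U_*\in\mathbb R^2$: writing $u_j=e^{i\omega t}(U_{*j}+v_j)$ and keeping linear terms gives $i v_j'=(1+\omega-\kappa U_{*j}^2)v_j-v_{1-j}-2\kappa U_{*j}^2\,\mathrm{Re}(v_j)$; with $v_j=q_j+ip_j$ this is $X'=\mathbb LX$ for $X=(q_0,p_0,q_1,p_1)\in\mathbb R^4$, $\mathbb L$ a real $4\times4$ matrix. Spectrally unstable means $\mathbb L$ has an eigenvalue with positive real part. The reference solution is orbitally stable if for every $\epsilon>0$ there is $\delta>0$ such that every solution $u$ of (H) with $|u(0)-U_*|\le\delta$ satisfies $\inf_{\theta\in\mathbb R}|u(t)-e^{i\theta}U_*|\le\epsilon$ for all $t\ge0$; orbitally unstable means not orbitally stable. *)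

From Stdlib Require Import Reals.
From Coquelicot Require Import Coquelicot.
From mathcomp Require Import all_boot all_algebra.
From mathcomp Require Import Rstruct complex.

Set Implicit Arguments.
Unset Strict Implicit.
Unset Printing Implicit Defensive.

Local Open Scope R_scope.

Definition H_rhs (kappa : R) (a b : C) : C :=
  Cminus (Cminus a b) (Cmult (RtoC (kappa * (Cmod a) ^ 2)) a).

Definition solH (kappa : R) (u0 u1 : R -> C) : Prop :=
  forall t : R,
    (exists d0 : C, is_derive u0 t d0 /\ Cmult Ci d0 = H_rhs kappa (u0 t) (u1 t)) /\
    (exists d1 : C, is_derive u1 t d1 /\ Cmult Ci d1 = H_rhs kappa (u1 t) (u0 t)).

Definition normC2 (a b : C) : R := sqrt (Cmod a ^ 2 + Cmod b ^ 2).

Definition expi (theta : R) : C := (cos theta, sin theta).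

Definition orbit_dist (x0 x1 : C) (U0 U1 : R) : Rbar :=
  Glb_Rbar (fun r => exists theta : R,
    r = normC2 (Cminus x0 (Cmult (expi theta) (RtoC U0)))
               (Cminus x1 (Cmult (expi theta) (RtoC U1)))).

Definition orbitally_stable (kappa U0 U1 : R) : Prop :=
  forall eps : R, 0 < eps -> exists delta : R, 0 < delta /\
    forall u0 u1 : R -> C, solH kappa u0 u1 ->
      normC2 (Cminus (u0 0) (RtoC U0)) (Cminus (u1 0) (RtoC U1)) <= delta ->
      forall t : R, 0 <= t -> Rbar_le (orbit_dist (u0 t) (u1 t) U0 U1) (Rbar.Finite eps).

Definition orbitally_unstable (kappa U0 U1 : R) : Prop :=
  ~ orbitally_stable kappa U0 U1.

(* i v_j' = (1+omega-kappa U_j^2) v_j - v_{1-j} - 2 kappa U_j^2 Re v_j,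
   v_j = q_j + i p_j, X = (q0,p0,q1,p1), X' = L X.  Writing c_j :=
   1+omega-kappa U_j^2 and separating real and imaginary parts:
     q_j' = c_j p_j - p_{1-j},
     p_j' = -(c_j - 2 kappa U_j^2) q_j + q_{1-j}.
   (The lemma Lmx_linearization below checks this against the complex form.) *)
Definition cj (kappa omega Uj : R) : R := 1 + omega - kappa * Uj ^ 2.

Definition Lentry (kappa omega U0 U1 : R) (i j : nat) : R :=
  let c0 := cj kappa omega U0 in
  let c1 := cj kappa omega U1 in
  let d0 := c0 - 2 * kappa * U0 ^ 2 in
  let d1 := c1 - 2 * kappa * U1 ^ 2 in
  match i, j with
  | 0%nat, 1%nat => c0 | 0%nat, 3%nat => -1
  | 1%nat, 0%nat => - d0 | 1%nat, 2%nat => 1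
  | 2%nat, 1%nat => -1 | 2%nat, 3%nat => c1
  | 3%nat, 0%nat => 1 | 3%nat, 2%nat => - d1
  | _, _ => 0
  end.

Definition Lmx (kappa omega U0 U1 : R) : 'M[R]_4 :=
  (\matrix_(i < 4, j < 4) Lentry kappa omega U0 U1 i j)%R.

Lemma Lmx_linearization (kappa omega U0 U1 q0 p0 q1 p1 : R) :
  let v0 : C := (q0, p0) in let v1 : C := (q1, p1) in
  let F (Uj : R) (vj vk : C) : C :=
    Cmult (Copp Ci)
      (Cminus (Cminus (Cmult (RtoC (cj kappa omega Uj)) vj) vk)
              (RtoC (2 * kappa * Uj ^ 2 * fst vj))) in
  let X : 'cV[R]_4 := (\col_(i < 4) [:: q0; p0; q1; p1]`_i)%R in
  let Y := (Lmx kappa omega U0 U1 *m X)%R in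
  (Y (@Ordinal 4 0 isT) ord0, Y (@Ordinal 4 1 isT) ord0) = F U0 v0 v1 /\
  (Y (@Ordinal 4 2 isT) ord0, Y (@Ordinal 4 3 isT) ord0) = F U1 v1 v0.
Proof.
move=> v0 v1 F X Y; rewrite /Y /X /F /v0 /v1.
rewrite !mxE !big_ord_recr !big_ord0 /= !mxE /=.
rewrite /Lentry /cj /Cmult /Cminus /Cplus /Copp /RtoC /Ci /=.
rewrite -?RplusE -?RmultE -?RoppE -?RminusE.
have Z : (0%R : R) = R0 by [].
rewrite ?Z; split; f_equal; ring.
Qed.

Definition spectrally_unstable (L : 'M[R]_4) : Prop :=
  exists (lam : R[i]) (v : 'cV[R[i]]_4),
    (0 < complex.Re lam)%R /\ (v != 0)%R /\
    (map_mx (fun x : R => (x%:C)%C) L *m v = lam *: v)%R.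

(* Put s = sqrt (2 (kappa - 2)) and U = (1, 1) / sqrt 2.  With omega = kappa / 2 the
   linearization has the real eigenvalue s, with eigenvector (1, s/2, -1, -s/2).
   For orbital instability, (H) has explicit homoclinic solutions: with
   E = eps e^(s t) = e^(s (t - t0)) and c = (2 + i s) / (sqrt 2 kappa),
     u_j(t) = c e^(i kappa t / 2) (1 +- s E / (E^2 + 1) + i (s/2) (E^2 - 1) / (E^2 + 1)),
   i.e. 1 +- (s/2) sech + i (s/2) tanh in the rotating frame.  As t -> -oo they
   tend to e^(i kappa t / 2) U, since c (1 - i s/2) = 1 / sqrt 2, and u(0) is within
   s eps of U.  At E = 1 however |u_0 - u_1| = s / sqrt kappa, while every point
   e^(i theta) U of the orbit has equal components, so the distance to the orbit is
   at least |u_0 - u_1| / sqrt 2. *)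

From Stdlib Require Import Reals Lra.
From Coquelicot Require Import Coquelicot.
From mathcomp Require Import all_boot all_algebra.
From mathcomp Require Import Rstruct complex.

Local Open Scope R_scope.

Lemma spectrally_unstable_of_real_eigen (L : 'M[R]_4) (lam : R) (v : 'cV[R]_4) :
  0 < lam -> (v != 0)%R -> (L *m v = lam *: v)%R -> spectrally_unstable L.
Proof.
move=> hlam hv Hv; exists (lam%:C)%C, (map_mx (real_complex R) v).
split; first exact/RltP.
split; first by rewrite map_mx_eq0.
by rewrite -map_mxM Hv map_mxZ.
Qed.

Definition symmetric_eigvec (s : R) : 'cV[R]_4 :=
  \col_(i < 4) nth 0 [:: 1; s / 2; -1; - s / 2] i.

Lemma Lmx_symmetric_eigen (kappa s : R) : s ^ 2 = 2 * (kappa - 2) ->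
  (Lmx kappa (kappa / 2) (/ sqrt 2) (/ sqrt 2) *m symmetric_eigvec s = s *: symmetric_eigvec s)%R.
Proof.
move=> hs.
have hU : / sqrt 2 * (/ sqrt 2 * 1) = / 2 by rewrite Rmult_1_r -Rinv_mult sqrt_sqrt; lra.
apply/matrixP => i j; rewrite !mxE !big_ord_recr big_ord0 /= !mxE /=.
case: i => [[|[|[|[|i]]]] ?] //=;
rewrite /Lentry /cj -?RplusE -?RmultE -?RoppE -?RminusE /GRing.zero /GRing.one /= hU; lra.
Qed.

Lemma symmetric_eigvec_neq0 (s : R) : (symmetric_eigvec s != 0)%R.
Proof.
apply/negP => /eqP /matrixP /(_ ord0 ord0).
rewrite !mxE /=; exact: R1_neq_R0.
Qed.

Lemma is_derive_Cpair (f g : R -> R) (x a b : R) :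
  is_derive f x a -> is_derive g x b ->
  @is_derive _ _ (fun t => (f t, g t) : C) x (a, b).
Proof.
move=> Hf Hg.
pose pair (u v : R) : C := (u, v).
apply: (filterdiff_comp_2 f g pair _ _ pair Hf Hg).
apply: (filterdiff_ext_lin _ (fun t => t)); last by case.
by apply: (filterdiff_ext (fun t => t)); [case | apply: filterdiff_id].
Qed.

Lemma Cmod_expi (theta : R) : Cmod (expi theta) = 1.
Proof. by rewrite /Cmod /expi /= !Rmult_1_r -!/(Rsqr _) Rplus_comm sin2_cos2 sqrt_1. Qed.

Lemma is_derive_rotating (c : C) (omega : R) (f g : R -> R) (x a b : R) :
  is_derive f x a -> is_derive g x b ->
  is_derive (fun t => Cmult c (Cmult (expi (omega * t)) (f t, g t))) x
    (Cmult c (Cmult (expi (omega * x))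
       (Cplus (a, b) (Cmult (Cmult Ci (RtoC omega)) (f x, g x))))).
Proof.
move=> Hf Hg; case: c => c1 c2.
have [Ef Eg] := (is_derive_unique _ _ _ Hf, is_derive_unique _ _ _ Hg).
have Xf : ex_derive f x by exists a.
have Xg : ex_derive g x by exists b.
rewrite /Cmult /Cplus /expi /Ci /RtoC /=.
apply: is_derive_Cpair; auto_derive; rewrite ?Ef ?Eg //; ring.
Qed.

Lemma H_rhs_scale (kappa : R) (l z0 z1 : C) :
  H_rhs kappa (Cmult l z0) (Cmult l z1) = Cmult l (H_rhs (kappa * Cmod l ^ 2) z0 z1).
Proof.
rewrite /H_rhs Cmod_mult Rpow_mult_distr -!Rmult_assoc !RtoC_mult; ring.
Qed.

Lemma rotating_H_rhs (kappa omega theta : R) (c z0 z1 d0 : C) :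
  kappa * Cmod c ^ 2 = 1 ->
  Cminus (Cmult Ci d0) (Cmult (RtoC omega) z0) = H_rhs 1 z0 z1 ->
  Cmult Ci (Cmult c (Cmult (expi theta) (Cplus d0 (Cmult (Cmult Ci (RtoC omega)) z0)))) =
  H_rhs kappa (Cmult c (Cmult (expi theta) z0)) (Cmult c (Cmult (expi theta) z1)).
Proof.
move=> Hc Hprof.
rewrite !Cmult_assoc H_rhs_scale Cmod_mult Cmod_expi Rmult_1_r Hc -Hprof.
have Hi : Cmult Ci (Cplus d0 (Cmult Ci (Cmult omega z0))) = Cminus (Cmult Ci d0) (Cmult omega z0).
{ clear; case: d0 (Cmult omega z0) => [a b] [x y].
  by rewrite /Cminus /Copp /Cplus /Cmult /Ci /=; f_equal; ring. }
rewrite -Hi; ring.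
Qed.

Definition pulseA (s sg E : R) : R := 1 + sg * s * E / (E ^ 2 + 1).
Definition pulseB (s E : R) : R := s / 2 * (E ^ 2 - 1) / (E ^ 2 + 1).
(* The t-derivatives of [pulseA] and [pulseB] along E = eps e^(s t), expressed in E. *)
Definition pulseA' (s sg E : R) : R := sg * s ^ 2 * E * (1 - E ^ 2) / (E ^ 2 + 1) ^ 2.
Definition pulseB' (s E : R) : R := 2 * s ^ 2 * E ^ 2 / (E ^ 2 + 1) ^ 2.

Lemma is_derive_pulseA (s sg eps t : R) :
  is_derive (fun t => pulseA s sg (eps * exp (s * t))) t (pulseA' s sg (eps * exp (s * t))).
Proof.
by rewrite /pulseA /pulseA'; auto_derive; [nra | field; nra].
Qed.

Lemma is_derive_pulseB (s eps t : R) :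
  is_derive (fun t => pulseB s (eps * exp (s * t))) t (pulseB' s (eps * exp (s * t))).
Proof.
by rewrite /pulseB /pulseB'; auto_derive; [nra | field; nra].
Qed.

Lemma pulse_profile_eq (s sg E : R) : sg = 1 \/ sg = -1 ->
  Cminus (Cmult Ci (pulseA' s sg E, pulseB' s E))
         (Cmult (RtoC (1 + s ^ 2 / 4)) (pulseA s sg E, pulseB s E)) =
  H_rhs 1 (pulseA s sg E, pulseB s E) (pulseA s (- sg) E, pulseB s E).
Proof.
rewrite /H_rhs Cmod2_alt /pulseA /pulseB /pulseA' /pulseB' /Cminus /Copp /Cplus /Cmult /Ci /RtoC /=.
by case=> ->; f_equal; field; nra.
Qed.

Lemma normC2_ge_Cmod_sub (z0 z1 w : C) :
  Cmod (Cminus z0 z1) / sqrt 2 <= normC2 (Cminus z0 w) (Cminus z1 w).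
Proof.
have hsqrt2 := Rlt_sqrt2_0.
have Htri : Cmod (Cminus z0 z1) <= Cmod (Cminus z0 w) + Cmod (Cminus z1 w).
{ rewrite -(Cmod_opp (Cminus z1 w)).
  have -> : Cminus z0 z1 = Cplus (Cminus z0 w) (Copp (Cminus z1 w)) by ring.
  exact: Cmod_triangle. }
move: (Cmod_ge_0 (Cminus z0 z1)) (Cmod_ge_0 (Cminus z0 w)) (Cmod_ge_0 (Cminus z1 w)) Htri.
rewrite /normC2; move: (Cmod (Cminus z0 z1)) (Cmod (Cminus z0 w)) (Cmod (Cminus z1 w)).
move=> c a b hc ha hb Htri.
rewrite -(sqrt_pow2 (c / sqrt 2)); last by apply: Rdiv_le_0_compat.
apply: sqrt_le_1_alt.
rewrite /Rdiv Rpow_mult_distr pow_inv pow2_sqrt; last lra.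
have : c ^ 2 <= (a + b) ^ 2 by apply: pow_incr.
have : (a + b) ^ 2 <= 2 * (a ^ 2 + b ^ 2) by have := pow2_ge_0 (a - b); lra.
lra.
Qed.

Lemma orbit_dist_ge_Cmod_sub (x0 x1 : C) (U : R) :
  Rbar_le (Cmod (Cminus x0 x1) / sqrt 2) (orbit_dist x0 x1 U U).
Proof.
have [_ Hglb] := Glb_Rbar_correct (fun r => exists theta : R,
  r = normC2 (Cminus x0 (Cmult (expi theta) (RtoC U)))
             (Cminus x1 (Cmult (expi theta) (RtoC U)))).
apply: Hglb => _ [theta ->]; exact: normC2_ge_Cmod_sub.
Qed.

Lemma orbitally_unstable_of_splitting (kappa U d : R) : 0 < d ->
  (forall delta, 0 < delta -> exists (u0 u1 : R -> C) (t : R),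
     [/\ solH kappa u0 u1,
        normC2 (Cminus (u0 0) (RtoC U)) (Cminus (u1 0) (RtoC U)) <= delta,
        0 <= t & d <= Cmod (Cminus (u0 t) (u1 t))]) ->
  orbitally_unstable kappa U U.
Proof.
move=> hd Hsplit Hstable.
have [delta [hdelta Hclose]] := Hstable (d / 2) ltac:(lra).
have [u0 [u1 [t [Hsol Hinit ht Hd]]]] := Hsplit delta hdelta.
have /= Hle := Rbar_le_trans _ _ _ (orbit_dist_ge_Cmod_sub (u0 t) (u1 t) U)
                 (Hclose u0 u1 Hsol Hinit t ht).
have hsqrt2 : sqrt 2 < 2.
{ rewrite -{2}(sqrt_pow2 2); last lra.
  apply: sqrt_lt_1_alt; lra. }
have hsqrt2_pos := Rlt_sqrt2_0.
have : d / 2 < Cmod (Cminus (u0 t) (u1 t)) / sqrt 2.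
{ apply: (Rlt_le_trans _ (d / sqrt 2)).
  - apply: Rmult_lt_compat_l => //; apply: Rinv_lt_contravar; nra.
  - apply: Rmult_le_compat_r => //; left; exact: Rinv_0_lt_compat. }
lra.
Qed.

Definition growth_rate (kappa : R) : R := sqrt (2 * (kappa - 2)).

Definition pulse_scale (kappa : R) : C :=
  (2 / (sqrt 2 * kappa), growth_rate kappa / (sqrt 2 * kappa)).

Definition pulse (kappa eps sg t : R) : C :=
  let s := growth_rate kappa in
  let E := eps * exp (s * t) in
  Cmult (pulse_scale kappa) (Cmult (expi (kappa / 2 * t)) (pulseA s sg E, pulseB s E)).

Section Pulse.

Variable kappa : R.
Hypothesis hkappa : 2 < kappa.

Local Notation s := (growth_rate kappa).

Lemma growth_rate_gt0 : 0 < s.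
Proof. apply: sqrt_lt_R0; lra. Qed.

Lemma growth_rate_sq : s ^ 2 = 2 * (kappa - 2).
Proof. rewrite pow2_sqrt; lra. Qed.

Lemma Cmod_pulse_scale : kappa * Cmod (pulse_scale kappa) ^ 2 = 1.
Proof.
have hsqrt2 := sqrt2_neq_0.
rewrite Cmod2_alt /pulse_scale /=.
have -> : kappa * ((2 / (sqrt 2 * kappa)) ^ 2 + (s / (sqrt 2 * kappa)) ^ 2)
          = (4 + s ^ 2) / (sqrt 2 ^ 2 * kappa) by field; lra.
rewrite growth_rate_sq pow2_sqrt; [field|]; lra.
Qed.

Lemma pulse_scale_limit : Cmult (pulse_scale kappa) (1, - s / 2) = RtoC (/ sqrt 2).
Proof.
have hsqrt2 := sqrt2_neq_0.
rewrite /pulse_scale /Cmult /RtoC /=; f_equal; last by field; lra.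
have -> : 2 / (sqrt 2 * kappa) * 1 - s / (sqrt 2 * kappa) * (- s / 2)
          = (4 + s ^ 2) / (2 * sqrt 2 * kappa) by field; lra.
rewrite growth_rate_sq; field; lra.
Qed.

Lemma pulse_solH (eps : R) : solH kappa (pulse kappa eps 1) (pulse kappa eps (-1)).
Proof.
have Homega : kappa / 2 = 1 + s ^ 2 / 4 by rewrite growth_rate_sq; lra.
move=> t; split; eexists; split.
- apply: is_derive_rotating; [apply: is_derive_pulseA | apply: is_derive_pulseB].
- apply: rotating_H_rhs; first exact: Cmod_pulse_scale.
  by rewrite Homega pulse_profile_eq; [|left].
- apply: is_derive_rotating; [apply: is_derive_pulseA | apply: is_derive_pulseB].
- apply: rotating_H_rhs; first exact: Cmod_pulse_scale.
  by rewrite Homega pulse_profile_eq ?Ropp_involutive; [|right].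
Qed.

Lemma Cmod_pulse_scale_sq : Cmod (pulse_scale kappa) ^ 2 = / kappa.
Proof. apply: (Rmult_eq_reg_l kappa); [rewrite Cmod_pulse_scale; field|]; lra. Qed.

Lemma pulse_at_zero (eps sg : R) :
  pulse kappa eps sg 0 = Cmult (pulse_scale kappa) (pulseA s sg eps, pulseB s eps).
Proof.
rewrite /pulse !Rmult_0_r exp_0 Rmult_1_r /expi cos_0 sin_0.
by rewrite (Cmult_1_l (_, _)).
Qed.

Lemma Cmod_pulse_deviation_sq (eps sg : R) : sg = 1 \/ sg = -1 ->
  Cmod (Cminus (pulse kappa eps sg 0) (RtoC (/ sqrt 2))) ^ 2
  = s ^ 2 * eps ^ 2 / (kappa * (eps ^ 2 + 1)).
Proof.
move=> Hsg.
rewrite pulse_at_zero -pulse_scale_limit.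
set c := pulse_scale kappa.
have -> : Cminus (Cmult c (pulseA s sg eps, pulseB s eps)) (Cmult c (1, - s / 2))
          = Cmult c (Cminus (pulseA s sg eps, pulseB s eps) (1, - s / 2)) by ring.
rewrite Cmod_mult Rpow_mult_distr Cmod_pulse_scale_sq Cmod2_alt.
rewrite /pulseA /pulseB /Cminus /Copp /Cplus /=.
by case: Hsg => ->; field; split; nra.
Qed.

Lemma pulse_initially_close (eps : R) : 0 < eps ->
  normC2 (Cminus (pulse kappa eps 1 0) (RtoC (/ sqrt 2)))
         (Cminus (pulse kappa eps (-1) 0) (RtoC (/ sqrt 2))) <= s * eps.
Proof.
move=> heps; have hs := growth_rate_gt0.
rewrite /normC2 !Cmod_pulse_deviation_sq; [|by right|by left].
rewrite -(sqrt_pow2 (s * eps)); last by nra.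
apply: sqrt_le_1_alt.
have : s ^ 2 * eps ^ 2 / (kappa * (eps ^ 2 + 1)) <= s ^ 2 * eps ^ 2 / 2.
{ apply: Rmult_le_compat_l; first by nra.
  apply: Rinv_le_contravar; nra. }
lra.
Qed.

Lemma Cmod_pulse_split (eps t : R) : eps * exp (s * t) = 1 ->
  Cmod (Cminus (pulse kappa eps 1 t) (pulse kappa eps (-1) t)) = s / sqrt kappa.
Proof.
move=> HE; rewrite /pulse HE.
set c := pulse_scale kappa; set e := expi (kappa / 2 * t).
have hs := growth_rate_gt0.
have -> : Cminus (Cmult c (Cmult e (pulseA s 1 1, pulseB s 1)))
                 (Cmult c (Cmult e (pulseA s (-1) 1, pulseB s 1)))
          = Cmult c (Cmult e (Cminus (pulseA s 1 1, pulseB s 1) (pulseA s (-1) 1, pulseB s 1)))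
  by ring.
have -> : Cminus (pulseA s 1 1, pulseB s 1) (pulseA s (-1) 1, pulseB s 1) = RtoC s.
  by rewrite /pulseA /pulseB /Cminus /Copp /Cplus /RtoC /=; f_equal; field.
rewrite !Cmod_mult Cmod_expi Cmod_R Rabs_pos_eq; last lra.
rewrite -(sqrt_pow2 (Cmod c)) ?Cmod_pulse_scale_sq ?sqrt_inv; last exact: Cmod_ge_0.
field; apply: Rgt_not_eq; apply: sqrt_lt_R0; lra.
Qed.

Lemma symmetric_state_orbitally_unstable : orbitally_unstable kappa (/ sqrt 2) (/ sqrt 2).
Proof.
have hs := growth_rate_gt0.
have hsk : 0 < s / sqrt kappa by apply: Rdiv_lt_0_compat => //; apply: sqrt_lt_R0; lra.
apply: (@orbitally_unstable_of_splitting kappa (/ sqrt 2) _ hsk) => delta hdelta.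
pose eps := Rmin 1 (delta / s).
have heps : 0 < eps by apply: Rmin_pos; [lra | exact: Rdiv_lt_0_compat].
have hlneps : ln eps <= 0 by rewrite -ln_1; apply: ln_le => //; exact: Rmin_l.
have hexit : eps * exp (s * (- ln eps / s)) = 1.
{ have -> : s * (- ln eps / s) = - ln eps by field; lra.
  rewrite exp_Ropp exp_ln //; field; lra. }
exists (pulse kappa eps 1), (pulse kappa eps (-1)), (- ln eps / s); split.
- exact: pulse_solH.
- apply: (Rle_trans _ _ _ (pulse_initially_close _ heps)).
  have -> : delta = s * (delta / s) by field; lra.
  apply: Rmult_le_compat_l; [lra | exact: Rmin_r].
- by apply: Rdiv_le_0_compat; [lra|].
- by rewrite (Cmod_pulse_split _ _ hexit); right.
Qed.

Lemma symmetric_state_spectrally_unstable :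
  spectrally_unstable (Lmx kappa (kappa / 2) (/ sqrt 2) (/ sqrt 2)).
Proof.
apply: (spectrally_unstable_of_real_eigen _ _ _ growth_rate_gt0 (symmetric_eigvec_neq0 s)).
exact: Lmx_symmetric_eigen growth_rate_sq.
Qed.

End Pulse.

Theorem mainTheorem2 (kappa : R) (hkappa : Rlt 2 kappa) :
  spectrally_unstable (Lmx kappa (kappa / 2) (/ sqrt 2) (/ sqrt 2)) /\
  orbitally_unstable kappa (/ sqrt 2) (/ sqrt 2).
Proof.
split; [exact: symmetric_state_spectrally_unstable | exact: symmetric_state_orbitally_unstable].
Qed.
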